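(* Let $(X,d,\mu)$ be a space of homogeneous type, let $p(\cdot)$ be an exponent, and let $w\in A_{p(\cdot)}$. Then there exists a constant $C$ depending on $p(\cdot)$ and $w$ such that for every ball $B$ and every measurable set $E\subset B$, \[ \frac{\mu(E)}{\mu(B)}\le C\,\frac{\|w\chi_E\|_{p(\cdot)}}{\|w\chi_B\|_{p(\cdot)}}. \]
   Context: A space of homogeneous type $(X,d,\mu)$: $X$ nonempty, $d$ a quasi-metric ($d(x,y)=0$ iff $x=y$, symmetric, $d(x,y)\le A_0(d(x,z)+d(z,y))$ for some $A_0\ge1$), $\mu$ a regular measure on the $\sigma$-algebra generated by balls $B(x,r)=\{y:d(x,y)<r\}$ and open sets, with $0<\mu(B(x,2r))\le C_\mu\mu(B(x,r))<\infty$. An exponent is a measurable $p:X\to[1,\infty]$. With $X_\infty=\{p=\infty\}$, $\rho_{p(\cdot)}(f)=\int_{X\setminus X_\infty}|f(x)|^{p(x)}d\mu+\|f\|_{L^\infty(X_\infty)}$ and $\|f\|_{p(\cdot)}=\inf\{\lambda>0:\rho_{p(\cdot)}(f/\lambda)\le1\}$; $p'(x)=p(x)/(p(x)-1)$ (with $1/0=\infty$, $1/\infty=0$). A weight is a locally integrable $w:X\to[0,\infty]$ with $0<w<\infty$ a.e.; $w\in A_{p(\cdot)}$ means there is $K$ with $\|w\chi_B\|_{p(\cdot)}\|w^{-1}\chi_B\|_{p'(\cdot)}\le K\mu(B)$ for every ball $B$. *)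

From HB Require Import structures.
From mathcomp Require Import all_boot all_order all_algebra.
From mathcomp Require Import all_classical all_reals all_analysis.
From mathcomp Require Import measurable_realfun.
Set Implicit Arguments. Unset Strict Implicit. Unset Printing Implicit Defensive.
Import Order.TTheory GRing.Theory Num.Theory.
Local Open Scope classical_set_scope.
Local Open Scope ring_scope.

Section Defs.
Context {d : measure_display} {T : measurableType d} {R : realType}.

Definition qball (dist : T -> T -> R) (x : T) (r : R) : set T :=
  [set y | dist x y < r].

Definition qopen (dist : T -> T -> R) (U : set T) : Prop :=
  forall x, U x -> exists2 r : R, 0 < r & qball dist x r `<=` U.

Definition quasi_metric (dist : T -> T -> R) : Prop :=
  (forall x y, 0 <= dist x y) /\
  (forall x y, dist x y = 0 <-> x = y) /\
  (forall x y, dist x y = dist y x) /\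
  (exists2 A0 : R, 1 <= A0 &
     forall x y z, dist x y <= A0 * (dist x z + dist z y)).

Definition qregular (dist : T -> T -> R) (mu : {measure set T -> \bar R}) : Prop :=
  forall A, measurable A ->
    mu A = ereal_inf [set mu U | U in [set U | qopen dist U /\ A `<=` U]].

Definition homogeneous_type (dist : T -> T -> R) (mu : {measure set T -> \bar R}) : Prop :=
  (exists x : T, True) /\
  quasi_metric dist /\
  (forall x r, measurable (qball dist x r)) /\
  (forall U, qopen dist U -> measurable U) /\
  qregular dist mu /\
  (exists Cmu : R, forall x (r : R), 0 < r ->
        [/\ (0 < mu (qball dist x r))%E,
            (mu (qball dist x r) < +oo)%E &
            (mu (qball dist x (2 * r)) <= Cmu%:E * mu (qball dist x r))%E]).

Definition exponent (p : T -> \bar R) : Prop :=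
  measurable_fun setT p /\ (forall x, 1%E <= p x)%E.

(* conjugate exponent p' = p/(p-1), with 1/0 = +oo and 1/+oo = 0 *)
Definition conj_exp (p : T -> \bar R) : T -> \bar R := fun x =>
  match p x with
  | r%:E => if r == 1 then +oo%E else (r / (r - 1))%:E
  | +oo%E => 1%E
  | -oo%E => 1%E
  end.

Definition Linf_on (mu : {measure set T -> \bar R}) (A : set T) (f : T -> R) : \bar R :=
  ereal_inf [set M : \bar R | (0 <= M)%E /\
    {ae mu, forall x, A x -> (`|f x|%:E <= M)%E}].

Definition modular (mu : {measure set T -> \bar R}) (p : T -> \bar R) (f : T -> R) : \bar R :=
  (\int[mu]_(x in [set x | p x != +oo%E]) (`|f x| `^ fine (p x))%:E
   + Linf_on mu [set x | p x = +oo%E] f)%E.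

Definition vnorm (mu : {measure set T -> \bar R}) (p : T -> \bar R) (f : T -> R) : \bar R :=
  ereal_inf [set l%:E | l in [set l : R | 0 < l /\ (modular mu p (fun x => (f x / l)%R) <= 1)%E]].

Definition weight (dist : T -> T -> R) (mu : {measure set T -> \bar R}) (w : T -> R) : Prop :=
  [/\ measurable_fun setT w,
      (forall x (r : R), 0 < r -> mu.-integrable (qball dist x r) (fun y => (w y)%:E)),
      (forall x, 0 <= w x) &
      {ae mu, forall x, 0 < w x}].

Definition A_p (dist : T -> T -> R) (mu : {measure set T -> \bar R}) (p : T -> \bar R)
    (w : T -> R) : Prop :=
  weight dist mu w /\
  exists K : R, forall x (r : R), 0 < r ->
    (vnorm mu p (fun y => (w y * \1_(qball dist x r) y)%R)
     * vnorm mu (conj_exp p) (fun y => ((w y)^-1 * \1_(qball dist x r) y)%R)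
     <= K%:E * mu (qball dist x r))%E.

End Defs.

From HB Require Import structures.
From mathcomp Require Import all_boot all_order all_algebra.
From mathcomp Require Import all_classical all_reals all_analysis.
From mathcomp Require Import measurable_realfun.
From mathcomp Require Import ring lra.
Import Order.TTheory GRing.Theory Num.Theory.
Local Open Scope classical_set_scope.
Local Open Scope ring_scope.

(* Hoelder's inequality for the Luxemburg norm, applied to [w \1_E] and
   [w^-1 \1_B], gives [mu E <= 4 ||w \1_E||_p ||w^-1 \1_B||_p'].  Multiplying
   by [||w \1_B||_p] and using the A_p(.) bound
   [||w \1_B||_p ||w^-1 \1_B||_p' <= K mu B] yields the claim with [C = 4 K].
   Both norms over [B] are positive, because on a subset of [B] of positive
   measure [w] (resp. [w^-1]) is bounded and Hoelder bounds the other norm from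
   below; as their product is finite, both are finite and the division is
   legitimate. *)

Set Implicit Arguments. Unset Strict Implicit.

Section measurability.
Context {d : measure_display} {T : measurableType d} {R : realType}.
Implicit Types f g : T -> R.

Lemma measurable_funpowR f g : measurable_fun setT f -> measurable_fun setT g ->
  measurable_fun setT (fun x => f x `^ g x).
Proof.
move=> mf mg.
rewrite (_ : (fun x => _) = fun x => if f x == 0 then (if g x == 0 then 1 else 0)
   else expR (g x * ln (f x))); last first.
  by apply/funext => x; rewrite /powR; case: (g x == 0).
apply: measurable_fun_ifT.
- exact: measurable_fun_eqr mf (measurable_cst _).
- apply: measurable_fun_ifT => //; exact: measurable_fun_eqr mg (measurable_cst _).
- apply: measurableT_comp; first exact: measurable_expR.
  apply: measurable_funM => //; apply: measurableT_comp => //; exact: measurable_ln.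
Qed.

Lemma measurable_funV_ge0 f : (forall x, 0 <= f x) -> measurable_fun setT f ->
  measurable_fun setT (fun x => (f x)^-1).
Proof.
move=> f0 mf; rewrite (_ : (fun x => _) = fun x => f x `^ (-1)).
  exact: measurableT_comp (measurable_powR _) mf.
by apply/funext => x; rewrite powR_inv1.
Qed.

Lemma measurable_sublevel (B : set T) g (n : R) : measurable B ->
  measurable_fun setT g -> measurable (B `&` [set y | g y <= n]).
Proof.
move=> mB mg; rewrite (_ : [set y | g y <= n] = setT `&` g @^-1` `]-oo, n]).
  by apply: measurableI => //; apply: mg => //; exact: measurable_itv.
by rewrite setTI; apply/seteqP; split => y; rewrite /= in_itv.
Qed.

Lemma measurable_conj_exp (p : T -> \bar R) : exponent p ->
  measurable_fun setT (conj_exp p).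
Proof.
move=> [mp p1].
rewrite (_ : conj_exp p = fun x => if p x == 1%E then +oo%E else
   if p x == +oo%E then 1%E else if p x == -oo%E then 1%E else
   (fine (p x) * (fine (p x) - 1) `^ (-1))%:E); last first.
  apply/funext => x; rewrite /conj_exp; move: (p1 x); case: (p x) => [r| |] //=.
  rewrite lee_fin => r1; rewrite eqe; case: ifPn => // _.
  by rewrite powR_inv1// subr_ge0.
do 3 (apply: measurable_fun_ifT => //; first exact: measurable_fun_eqe).
apply/measurable_EFinP; have mfp : measurable_fun setT (fine \o p).
  exact: measurableT_comp.
apply: measurable_funM => //; apply: measurableT_comp (measurable_powR _) _.
exact: measurable_funB.
Qed.

End measurability.

Section modular.
Context {d : measure_display} {T : measurableType d} {R : realType}.
Variable mu : {measure set T -> \bar R}.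
Implicit Types (p q : T -> \bar R) (f u v : T -> R).

Definition modular_density p f (x : T) : \bar R :=
  if p x == +oo%E then 0%E else (`|f x| `^ fine (p x))%:E.

Lemma modular_density_ge0 p f x : (0 <= modular_density p f x)%E.
Proof. by rewrite /modular_density; case: ifPn => // _; rewrite lee_fin powR_ge0. Qed.

Lemma measurable_modular_density p f : measurable_fun setT p ->
  measurable_fun setT f -> measurable_fun setT (modular_density p f).
Proof.
move=> mp mf; apply: measurable_fun_ifT => //; first exact: measurable_fun_eqe.
by apply/measurable_EFinP/measurable_funpowR; exact: measurableT_comp.
Qed.

Lemma integral_modular_density p f :
  (\int[mu]_x modular_density p f x =
   \int[mu]_(x in [set x | p x != +oo%E]) (`|f x| `^ fine (p x))%:E)%E.
Proof.
rewrite [RHS]integral_mkcond; apply: eq_integral => x _; rewrite /patch.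
rewrite /modular_density; have [px|px] := eqVneq (p x) +oo%E.
  by rewrite memNset // /= px.
by rewrite mem_set.
Qed.

Lemma conj_exp_ge1 p : (forall x, 1 <= p x)%E -> forall x, (1 <= conj_exp p x)%E.
Proof.
move=> p1 x; have := p1 x; rewrite /conj_exp; case: (p x) => [s| |] //=.
rewrite lee_fin => s1; case: ifPn => [_|/eqP sn1]; first exact: leey.
by rewrite lee_fin ler_pdivlMr; lra.
Qed.

(* The [L^oo] parts are only known to be bounded by [2], which is where the
   factor [2] comes from. *)
Lemma young_conj_exp p u v x : (1 <= p x)%E ->
  (p x = +oo%E -> `|u x| <= 2) -> (conj_exp p x = +oo%E -> `|v x| <= 2) ->
  ((`|u x * v x|)%:E
   <= 2%:E * (modular_density p u x + modular_density (conj_exp p) v x))%E.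
Proof.
rewrite /modular_density /conj_exp; case: (p x) => [r| |] /=.
- rewrite lee_fin => r1 _; case: ifPn => [/eqP -> Hv|rn1 _].
  + have := Hv erefl; rewrite eqxx powRr1 // adde0 -EFinM lee_fin normrM => hv.
    have := normr_ge0 (u x); nra.
  + have r1' : 1 < r by rewrite lt_neqAle eq_sym rn1.
    have s1 : 1 <= r / (r - 1) by rewrite ler_pdivlMr; lra.
    have rs : r^-1 + (r / (r - 1))^-1 = 1 by rewrite invf_div; field; lra.
    have := conjugate_powR (normr_ge0 (u x)) (normr_ge0 (v x))
      (lt_le_trans ltr01 (ltW r1')) (lt_le_trans ltr01 s1) rs.
    set A := `|u x| `^ r; set B := `|v x| `^ (r / (r - 1)) => young.
    have A0 : 0 <= A by exact: powR_ge0.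
    have B0 : 0 <= B by exact: powR_ge0.
    have hA : A / r <= A by rewrite ler_pdivrMr; nra.
    have hB : B / (r / (r - 1)) <= B by rewrite ler_pdivrMr; nra.
    rewrite -EFinD -EFinM lee_fin normrM; lra.
- move=> _ Hu _; have := Hu erefl.
  rewrite /= powRr1 // add0e -EFinM lee_fin normrM => hu.
  have := normr_ge0 (v x); nra.
- by rewrite leeNy_eq.
Qed.

Lemma modular_le1_parts q f : (modular mu q f <= 1)%E ->
  (\int[mu]_x modular_density q f x <= 1)%E /\
  {ae mu, forall x, q x = +oo%E -> `|f x| <= 2}.
Proof.
rewrite /modular integral_modular_density => H.
have I0 : (0 <= \int[mu]_(x in [set x | q x != +oo%E]) (`|f x| `^ fine (q x))%:E)%E.
  by apply: integral_ge0 => x _; rewrite lee_fin powR_ge0.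
have L0 : (0 <= Linf_on mu [set x | q x = +oo%E] f)%E.
  by apply/ereal_infP => y [].
split; first exact: le_trans (leeDl _ L0) H.
have : (Linf_on mu [set x | q x = +oo%E] f < 2%:E)%E.
  by apply: le_lt_trans (le_trans (leeDr _ I0) H) _; rewrite lte_fin; lra.
move=> /ereal_inf_lt [M [_ HM] M2]; apply: filterS HM => x Hx qx.
by rewrite -lee_fin; exact: le_trans (Hx qx) (ltW M2).
Qed.

Lemma modular_le1_hoelder p u v : exponent p ->
  measurable_fun setT u -> measurable_fun setT v ->
  (modular mu p u <= 1)%E -> (modular mu (conj_exp p) v <= 1)%E ->
  (\int[mu]_x (`|u x * v x|)%:E <= 4%:E)%E.
Proof.
move=> hp mfu mfv /modular_le1_parts[Iu aeu] /modular_le1_parts[Iv aev].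
have [mp p1] := hp.
set h1 := modular_density p u; set h2 := modular_density (conj_exp p) v.
have mh1 : measurable_fun setT h1 by exact: measurable_modular_density.
have mh2 : measurable_fun setT h2.
  by apply: measurable_modular_density => //; exact: measurable_conj_exp.
have mh := emeasurable_funD mh1 mh2.
have h0 x : (0 <= h1 x + h2 x)%E by rewrite adde_ge0 ?modular_density_ge0.
apply: (@le_trans _ _ (\int[mu]_x (2%:E * (h1 x + h2 x)))%E).
  have muv : measurable_fun setT (fun x => (`|u x * v x|)%:E).
    by apply/measurable_EFinP; apply: measurableT_comp => //; exact: measurable_funM.
  apply: (ae_ge0_le_integral measurableT _ muv _ (measurable_funeM _ mh)).
  - by move=> x _; rewrite lee_fin.
  - by move=> x _; rewrite mule_ge0.
  - by apply: filterS2 aeu aev => x Hux Hvx _; exact: young_conj_exp (p1 x) Hux Hvx.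
rewrite ge0_integralZl_EFin // ge0_integralD //; last 2 first.
  - by move=> x _; exact: modular_density_ge0.
  - by move=> x _; exact: modular_density_ge0.
rewrite (_ : 4%:E = 2%:E * 2%:E)%E; last by rewrite -EFinM; congr EFin; lra.
apply: lee_wpmul2l => //; rewrite (_ : 2%:E = 1 + 1)%E; last by rewrite -EFinD.
exact: leeD.
Qed.

End modular.

Lemma ge1r_powR_ge0 {R : realType} (a r : R) : 0 <= a -> a <= 1 -> 1 <= r ->
  a `^ r <= a.
Proof.
move=> a0 a1 r1; have [->|an0] := eqVneq a 0; first by rewrite powR0 //; lra.
by apply: ge1r_powR => //; rewrite a1 andbT lt_neqAle eq_sym an0.
Qed.

Section luxemburg.
Context {d : measure_display} {T : measurableType d} {R : realType}.
Variable mu : {measure set T -> \bar R}.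
Implicit Types (q : T -> \bar R) (f g h : T -> R).

(* Unlike [ge0_le_integral], this needs no measurability: the integral of a
   nonnegative function is a supremum over the simple functions below it. *)
Lemma ge0_le_integral_nonmeasurable (D : set T) (f1 f2 : T -> \bar R) :
  (forall x, D x -> (0 <= f1 x)%E) -> (forall x, D x -> (f1 x <= f2 x)%E) ->
  (\int[mu]_(x in D) f1 x <= \int[mu]_(x in D) f2 x)%E.
Proof.
move=> f10 f12.
have f20 x : D x -> (0 <= f2 x)%E by move=> Dx; exact: le_trans (f10 _ Dx) (f12 _ Dx).
rewrite !ge0_integralE//; apply: le_ereal_sup => _ [g gf <-]; exists g => // x.
by apply: le_trans (gf x) _; rewrite /patch; case: ifPn => // /[1!inE]; exact: f12.
Qed.

Lemma vnorm_ge0 q f : (0 <= vnorm mu q f)%E.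
Proof. by apply/ereal_infP => _ [l [l0 _] <-]; rewrite lee_fin ltW. Qed.

Lemma vnorm_ge_scale q f (k : R) (X : \bar R) : 0 < k ->
  (forall l, 0 < l -> (modular mu q (fun x => (f x / l)%R) <= 1)%E ->
    (X <= (k * l)%:E)%E) ->
  (X <= k%:E * vnorm mu q f)%E.
Proof.
move=> k0 H; rewrite -lee_pdivrMl //.
apply/ereal_infP => _ [l [l0 Hl] <-].
by rewrite lee_pdivrMl // -EFinM; exact: H.
Qed.

Lemma measure_sublevel_gt0 (B : set T) g : measurable B -> (0 < mu B)%E ->
  measurable_fun setT g ->
  exists n : nat, (0 < mu (B `&` [set y | (g y <= n%:R)%R]))%E.
Proof.
move=> mB muB mg; apply: contrapT => none.
have null n : mu (B `&` [set y | (g y <= n%:R)%R]) = 0%E.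
  apply/eqP; rewrite eq_le measure_ge0 andbT leNgt; apply/negP => h.
  by apply: none; exists n.
have : (mu B <= \big[+%E/0%E]_(0 <= n <oo) mu (B `&` [set y | (g y <= n%:R)%R]))%E.
  apply: measure_sigma_subadditive => //; first by move=> n; exact: measurable_sublevel.
  move=> y By; exists (Num.Def.trunc `|g y|).+1 => //; split => //=.
  by apply: le_trans (ltW (truncnS_gt _)); exact: ler_norm.
by rewrite eseries0 ?leNgt ?muB // => i _ _; exact: null.
Qed.

(* Scaling by [(n + 1) (mu F + 1)] makes [|h / l| <= 1] and puts it below
   [(mu F + 1)^-1] on [F], so both parts of the modular sum to at most [1]. *)
Lemma exists_modular_le1 q h (F : set T) (n : R) :
  (forall x, 1 <= q x)%E -> measurable F -> (mu F < +oo)%E ->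
  0 <= n -> (forall y, `|h y| <= n * \1_F y) ->
  exists2 l, 0 < l & (modular mu q (fun y => (h y / l)%R) <= 1)%E.
Proof.
move=> q1 mF muFoo n0 hb.
have [m m0 muFm] : exists2 m : R, 0 <= m & (mu F <= m%:E)%E.
  by exists (fine (mu F)); rewrite ?fine_ge0 // fineK // ge0_fin_numE.
clear muFoo.
set k := (m + 1)^-1.
have k0 : 0 < k by rewrite invr_gt0; lra.
have k1 : k <= 1 by rewrite invf_le1; lra.
have l0 : 0 < (n + 1) * (m + 1) by apply: mulr_gt0; lra.
exists ((n + 1) * (m + 1)) => //; set l := (n + 1) * (m + 1).
have hl y : `|h y / l| <= k * \1_F y.
  rewrite normrM normfV (ger0_norm (ltW l0)); move: (hb y).
  rewrite indicE; case: (y \in F) => /= hy; last first.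
    by rewrite !mulr0 in hy *; rewrite ler_pdivrMr // mul0r.
  have kl : k * l = n + 1 by rewrite /k /l; field; lra.
  by rewrite mulr1 ler_pdivrMr // kl; lra.
have hk y : `|h y / l| <= k.
  by apply: le_trans (hl y) _; rewrite indicE; case: (y \in F) => /=; lra.
have I : (\int[mu]_(x in [set x | q x != +oo%E]) (`|h x / l| `^ fine (q x))%:E
          <= (k * m)%:E)%E.
  apply: (@le_trans _ _ (\int[mu]_x (k * \1_F x)%:E)%E).
    rewrite integral_mkcond; apply: ge0_le_integral_nonmeasurable => x _.
      by rewrite /patch; case: ifP => // _; rewrite lee_fin powR_ge0.
    rewrite /patch; case: ifPn => [/[1!inE] qx|_]; rewrite lee_fin; last first.
      by rewrite mulr_ge0 // ltW.
    apply: le_trans (hl x); apply: ge1r_powR_ge0 => //; first exact: le_trans (hk x) k1.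
    by move: (q1 x) qx => /=; case: (q x) => [r| |] //=; rewrite ?lee_fin ?leeNy_eq.
  rewrite (_ : (fun x => _) = (fun x => k%:E * (\1_F x)%:E)%E); last first.
    by apply/funext => x; rewrite EFinM.
  have mi : measurable_fun setT (fun x => (\1_F x : R)%:E).
    by apply/measurable_EFinP; exact: measurable_indic.
  rewrite ge0_integralZl_EFin ?(ltW k0) // integral_indic // setIT EFinM.
  by rewrite lee_wpmul2l // lee_fin ltW.
have L : (Linf_on mu [set x | q x = +oo%E] (fun y => (h y / l)%R) <= k%:E)%E.
  apply: ereal_inf_lbound; split; first by rewrite lee_fin ltW.
  by apply: aeW => x _; rewrite lee_fin; exact: hk.
apply: le_trans (leeD I L) _.
by rewrite -EFinD lee_fin /k (_ : (m + 1)^-1 * m + (m + 1)^-1 = 1) //; field; lra.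
Qed.

Lemma exists_admissible_subset q g (B : set T) :
  (forall x, 1 <= q x)%E -> measurable_fun setT g -> (forall x, 0 <= g x) ->
  measurable B -> (0 < mu B)%E -> (mu B < +oo)%E ->
  exists G, [/\ measurable G, G `<=` B, (0 < mu G)%E &
    exists2 l, 0 < l & (modular mu q (fun y => (g y * \1_G y / l)%R) <= 1)%E].
Proof.
move=> q1 mg g0 mB muB0 muBoo.
have [n muG0] := measure_sublevel_gt0 mB muB0 mg.
set G := B `&` _ in muG0; have mG : measurable G by exact: measurable_sublevel.
have GB : G `<=` B by move=> y [].
exists G; split => //; apply: (exists_modular_le1 q1 mG _ (ler0n _ n)).
  exact: le_lt_trans (le_measure _ (mem_set mG) (mem_set mB) GB) muBoo.
move=> y; rewrite indicE; have [yG|_] := boolP (y \in G).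
  by move: yG; rewrite inE => -[_ gn]; rewrite /= !mulr1 ger0_norm.
by rewrite /= !mulr0 normr0.
Qed.

End luxemburg.

Section weighted_indicators.
Context {d : measure_display} {T : measurableType d} {R : realType}.
Variables (mu : {measure set T -> \bar R}) (p : T -> \bar R) (w : T -> R).
Hypotheses (hp : exponent p) (mw : measurable_fun setT w)
  (w0 : forall x, 0 <= w x) (aew : {ae mu, forall x, 0 < w x}).

(* On [F1 `&` F2] the product of [w \1_F1 / l] and [w^-1 \1_F2 / m] is
   [1 / (l m)] almost everywhere. *)
Lemma measureI_le_mul (F1 F2 : set T) (l m : R) :
  measurable F1 -> measurable F2 -> 0 < l -> 0 < m ->
  (modular mu p (fun y => (w y * \1_F1 y / l)%R) <= 1)%E ->
  (modular mu (conj_exp p) (fun y => ((w y)^-1 * \1_F2 y / m)%R) <= 1)%E ->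
  (mu (F1 `&` F2) <= (4 * l * m)%:E)%E.
Proof.
move=> mF1 mF2 l0 m0 Hu Hv; have lm0 : 0 < l * m by exact: mulr_gt0.
set u := fun y => w y * \1_F1 y / l in Hu.
set v := fun y => (w y)^-1 * \1_F2 y / m in Hv.
have mfu : measurable_fun setT u.
  by apply: measurable_funM => //; apply: measurable_funM => //;
    exact: measurable_indic.
have mfv : measurable_fun setT v.
  apply: measurable_funM => //; apply: measurable_funM; last exact: measurable_indic.
  exact: measurable_funV_ge0.
have muv : measurable_fun setT (fun x => (`|u x * v x|)%:E).
  by apply/measurable_EFinP; apply: measurableT_comp => //; exact: measurable_funM.
have mi : measurable_fun setT (fun x => (\1_(F1 `&` F2) x : R)%:E).
  by apply/measurable_EFinP; apply: measurable_indic; exact: measurableI.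
rewrite -(setIT (F1 `&` F2)) -integral_indic //; last exact: measurableI.
apply: (@le_trans _ _ (\int[mu]_x ((l * m)%:E * (`|u x * v x|)%:E))%E).
  apply: (ae_ge0_le_integral measurableT _ mi _ (measurable_funeM _ muv)).
  - by move=> x _; rewrite lee_fin.
  - by move=> x _; rewrite -EFinM lee_fin mulr_ge0 // ltW.
  apply: filterS aew => x wx _; rewrite -EFinM lee_fin /u /v !indicE in_setI.
  case: (x \in F1) (x \in F2) => [] [] /=; try by rewrite mulr_ge0 // ltW.
  have -> : w x * 1%:R / l * ((w x)^-1 * 1%:R / m) = (l * m)^-1.
    by field; rewrite !lt0r_neq0.
  by rewrite ger0_norm ?invr_ge0 ?(ltW lm0) // mulfV // lt0r_neq0.
rewrite ge0_integralZl_EFin ?(ltW lm0) //.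
apply: le_trans (lee_wpmul2l _ (modular_le1_hoelder hp mfu mfv Hu Hv)) _.
  by rewrite lee_fin ltW.
by rewrite -EFinM lee_fin; lra.
Qed.

Lemma measureI_le_vnorml (F1 F2 : set T) (l : R) :
  measurable F1 -> measurable F2 -> 0 < l ->
  (modular mu p (fun y => (w y * \1_F1 y / l)%R) <= 1)%E ->
  (mu (F1 `&` F2)
   <= (4 * l)%:E * vnorm mu (conj_exp p) (fun y => ((w y)^-1 * \1_F2 y)%R))%E.
Proof.
move=> mF1 mF2 l0 Hl; apply: vnorm_ge_scale; first by rewrite mulr_gt0.
by move=> m m0 Hm; exact: measureI_le_mul.
Qed.

Lemma measureI_le_vnormr (F1 F2 : set T) (m : R) :
  measurable F1 -> measurable F2 -> 0 < m ->
  (modular mu (conj_exp p) (fun y => ((w y)^-1 * \1_F2 y / m)%R) <= 1)%E ->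
  (mu (F1 `&` F2) <= (4 * m)%:E * vnorm mu p (fun y => (w y * \1_F1 y)%R))%E.
Proof.
move=> mF1 mF2 m0 Hm; apply: vnorm_ge_scale; first by rewrite mulr_gt0.
by move=> l l0 Hl; rewrite mulrAC; exact: measureI_le_mul.
Qed.

Lemma measureI_le_vnormM (F1 F2 : set T) : measurable F1 -> measurable F2 ->
  vnorm mu (conj_exp p) (fun y => ((w y)^-1 * \1_F2 y)%R) \is a fin_num ->
  (0 < vnorm mu (conj_exp p) (fun y => ((w y)^-1 * \1_F2 y)%R))%E ->
  (mu (F1 `&` F2) <= 4%:E * vnorm mu p (fun y => (w y * \1_F1 y)%R)
                         * vnorm mu (conj_exp p) (fun y => ((w y)^-1 * \1_F2 y)%R))%E.
Proof.
move=> mF1 mF2 cfin c0; set c := vnorm _ _ _ in cfin c0 *.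
have cE : c = (fine c)%:E by rewrite fineK.
rewrite [c in (_ * c)%E]cE muleAC -EFinM; apply: vnorm_ge_scale.
  by rewrite mulr_gt0 // -lte_fin -cE.
move=> l l0 Hl; rewrite mulrAC EFinM -cE; exact: measureI_le_vnorml.
Qed.

Lemma vnorm_weight_gt0 (B : set T) :
  measurable B -> (0 < mu B)%E -> (mu B < +oo)%E ->
  (0 < vnorm mu p (fun y => (w y * \1_B y)%R))%E.
Proof.
move=> mB muB0 muBoo; have winv0 x : 0 <= (w x)^-1 by rewrite invr_ge0.
have [G [mG GB muG0 [m m0 Hm]]] := exists_admissible_subset (conj_exp_ge1 hp.2)
  (measurable_funV_ge0 w0 mw) winv0 mB muB0 muBoo.
have := measureI_le_vnormr mB mG m0 Hm; rewrite setIidr //.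
rewrite lt_neqAle vnorm_ge0 andbT => muG_le; apply/eqP => b0.
by move: muG_le; rewrite -b0 mule0 leNgt muG0.
Qed.

Lemma vnorm_invweight_gt0 (B : set T) :
  measurable B -> (0 < mu B)%E -> (mu B < +oo)%E ->
  (0 < vnorm mu (conj_exp p) (fun y => ((w y)^-1 * \1_B y)%R))%E.
Proof.
move=> mB muB0 muBoo.
have [G [mG GB muG0 [l l0 Hl]]] :=
  exists_admissible_subset hp.2 mw w0 mB muB0 muBoo.
have := measureI_le_vnorml mG mB l0 Hl; rewrite setIidl //.
rewrite lt_neqAle vnorm_ge0 andbT => muG_le; apply/eqP => b0.
by move: muG_le; rewrite -b0 mule0 leNgt muG0.
Qed.

End weighted_indicators.

Section ereal_bounds.
Context {R : realType}.
Local Open Scope ereal_scope.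

Lemma fin_num_of_mul_le (b c m : \bar R) (K : R) : 0 < b -> 0 < c ->
  m \is a fin_num -> b * c <= K%:E * m -> b \is a fin_num /\ c \is a fin_num.
Proof.
move=> b0 c0 /fineK <-; rewrite -EFinM => bc.
rewrite !ge0_fin_numE ?ltW // !ltey; split; apply/eqP => oo.
  by move: bc; rewrite oo gt0_mulye // leye_eq.
by move: bc; rewrite oo gt0_muley // leye_eq.
Qed.

Lemma ratio_le_of_mul_le (k K : R) (e a b c m : \bar R) : (0 < k)%R ->
  0 <= e -> 0 < m -> m \is a fin_num -> 0 <= a ->
  0 < b -> b \is a fin_num -> 0 < c -> c \is a fin_num ->
  e <= k%:E * a * c -> b * c <= K%:E * m ->
  e / m <= (k * K)%:E * (a / b).
Proof.
move=> k0 e0 m0 /fineK mE a0 b0 /fineK bE c0 /fineK cE.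
move: m0 b0 c0; rewrite -mE -bE -cE !lte_fin.
set m1 := fine m; set b1 := fine b; set c1 := fine c => m0 b0 c0 ea.
rewrite -EFinM lee_fin => bc; have K0 : (0 < K)%R by nra.
rewrite !inver (gt_eqF b0) (gt_eqF m0) /=.
case: a a0 ea => [a1 a0|_|] // ea; last first.
  by rewrite gt0_mulye ?lte_fin ?invr_gt0 // gt0_muley ?lte_fin ?mulr_gt0 // leey.
case: e e0 ea => [e1 e0| |] //; rewrite -!EFinM !lee_fin => ea.
have eb : (e1 * b1 <= k * K * a1 * m1)%R.
  have := ler_wpM2r (ltW b0) ea; have := ler_wpM2l (mulr_ge0 (ltW k0) a0) bc; nra.
by rewrite ler_pdivrMr // mulrA mulrAC ler_pdivlMr.
Qed.

End ereal_bounds.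

Theorem lemma3p2 (d : measure_display) (T : measurableType d) (R : realType)
  (dist : T -> T -> R) (mu : {measure set T -> \bar R})
  (p : T -> \bar R) (w : T -> R) :
  homogeneous_type dist mu -> exponent p -> A_p dist mu p w ->
  exists C : R, forall (x : T) (r : R) (E : set T),
    0 < r -> measurable E -> E `<=` qball dist x r ->
    (mu E / mu (qball dist x r)
     <= C%:E * (vnorm mu p (fun y => (w y * \1_E y)%R)
                / vnorm mu p (fun y => (w y * \1_(qball dist x r) y)%R)))%E.
Proof.
move=> [_ [_ [mball [_ [_ [Cmu hmu]]]]]] hp [[mw _ w0 aew] [K HK]].
exists (4 * K) => x r E r0 mE EB.
have [muB0 muBoo _] := hmu x r r0; have mB := mball x r; have hK := HK x r r0.
set B := qball dist x r in EB muB0 muBoo mB hK *.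
have muBfin : mu B \is a fin_num by rewrite ge0_fin_numE.
have b0 := vnorm_weight_gt0 hp mw w0 aew mB muB0 muBoo.
have c0 := vnorm_invweight_gt0 hp mw w0 aew mB muB0 muBoo.
have [bfin cfin] := fin_num_of_mul_le b0 c0 muBfin hK.
have hE : (mu E <= 4%:E * vnorm mu p (fun y => (w y * \1_E y)%R) *
    vnorm mu (conj_exp p) (fun y => ((w y)^-1 * \1_B y)%R))%E.
  by rewrite -{1}(setIidl EB); apply: measureI_le_vnormM.
exact: (ratio_le_of_mul_le _ (measure_ge0 _ _) muB0 muBfin (vnorm_ge0 _ _ _)
  b0 bfin c0 cfin hE hK).
Qed.
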